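(* Let $\mathcal{P}$ be a ${\rm DLP}^{<}$ program and let $M$ be a (${\rm DLP}^{<}$-)answer set for $\mathcal{P}$. Then $M$ is a minimal model of $\mathcal{P}$, i.e. $M$ is a model for $\mathcal{P}$ and no proper subset of $M$ is a model for $\mathcal{P}$.
   Context: Syntax. Fix pairwise disjoint sets of variables, predicates and constants (no function symbols), and a finite strictly partially ordered set $(\mathcal{O},<)$ of object identifiers. An atom is $p(t_1,\dots,t_n)$ with $p$ an $n$-ary predicate and each $t_i$ a constant or variable. A literal is an atom $p$ or its strong negation $\neg p$; for a literal $L$, $\neg.L$ denotes its complementary literal. A rule has the form $a_1\vee\dots\vee a_n \leftarrow b_1,\dots,b_k,\ \mathtt{not}\ b_{k+1},\dots,\mathtt{not}\ b_m\ \otimes$ with $n\ge 1$, $m\ge 0$, all $a_i,b_j$ literals, and $\otimes$ either ''.'' (the rule is defeasible) or ''!'' (the rule is strict). $Head(r)=\{a_1,\dots,a_n\}$, $Body^+(r)=\{b_1,\dots,b_k\}$, $Body^-(r)=\{b_{k+1},\dots,b_m\}$. An object is a pair $(oid(o),\Sigma(o))$ of an identifier in $\mathcal{O}$ and a set of rules; a knowledge base contains one object per identifier; the ${\rm DLP}^{<}$ program for $o$ is the set of objects $o'$ of the knowledge base with $o'=o$ or $o<o'$, ordered by $<$ on identifiers. Semantics. The Universe of $\mathcal{P}$ is the set of constants appearing in its rules; the Base $B_{\mathcal{P}}$ is the set of all ground literals (positive and negative) built from predicates of $\mathcal{P}$ and constants of the Universe. $ground(\mathcal{P})$ is the multiset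 of all ground instances of rules of $\mathcal{P}$ (instances of a rule occurring in several objects are kept distinct), and $obj\_of(r)$ is the object a ground instance $r$ comes from. An interpretation is a subset of $B_{\mathcal{P}}$ containing no pair of complementary literals. A ground literal $L$ is true in $I$ iff $L\in I$. The head of a ground rule is true in $I$ if some head literal is in $I$; the body is true in $I$ if $Body^+(r)\subseteq I$ and $Body^-(r)\cap I=\emptyset$; $r$ is satisfied in $I$ if its head is true or its body is not true in $I$. Ground rule $r_1$ threatens $r_2$ on $L$ if $\neg.L\in Head(r_1)$, $L\in Head(r_2)$, $obj\_of(r_1)<obj\_of(r_2)$ and $r_2$ is defeasible. $r_1$ overrides $r_2$ on $L$ in $I$ if $r_1$ threatens $r_2$ on $L$, $\neg.L\in I$, and the body of $r_2$ is true in $I$. A rule $r\in ground(\mathcal{P})$ is overridden in $I$ if for every $L\in Head(r)$ some $r_1\in ground(\mathcal{P})$ overrides $r$ on $L$ in $I$. $I$ is a model for $\mathcal{P}$ if every rule of $ground(\mathcal{P})$ is satisfied or overridden in $I$; it is a minimal model if no proper subset is a model. The reduction $G_I(\mathcal{P})$ is obtained from $ground(\mathcal{P})$ by (1) removing every rule overridden in $I$, (2) removing every rule $r$ with $Body^-(r)\cap I\neq\emptyset$, (3) deleting the $\mathtt{not}$-part of the remaining rules (and ignoring the strict/defeasible marker). For a set $S$ of ground rules, $pos(S)$ is the positive disjunctive program obtained by regarding each negative literal $\neg p(\bar t)$ as an atom of a new predicate $\neg p$. A model $M$ for $\mathcal{P}$ is a (${\rm DLP}^{<}$-)answer set for $\mathcal{P}$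 if $M$ is a minimal model (a subset-minimal set of atoms satisfying every rule) of $pos(G_M(\mathcal{P}))$. *)

From mathcomp Require Import all_boot.
From Stdlib Require List.
Set Implicit Arguments. Unset Strict Implicit. Unset Printing Implicit Defensive.

(* Constants, variables and predicate names are encoded by nat; the three
   syntactic categories are kept apart by the types below. *)
(* A term is a constant (inl c) or a variable (inr v). *)
Definition term := (nat + nat)%type.
(* An atom p(t1,...,tn): predicate name p and argument list; the predicate
   symbol is the pair (name, arity = size of the argument list). *)
Definition atom := (nat * seq term)%type.
(* A literal: sign (true = positive atom p, false = strong negation ~p). *)
Definition literal := (bool * atom)%type.

Record rule := Rule {
  rhead   : seq literal;
  rbpos   : seq literal;
  rbneg   : seq literal;
  rstrict : bool           (* true: "!" (strict), false: "." (defeasible) *)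
}.

Definition glit := (bool * (nat * seq nat))%type.
Record grule := GRule {
  ghead   : seq glit;
  gbpos   : seq glit;
  gbneg   : seq glit;
  gstrict : bool
}.

Definition gneg (L : glit) : glit := (~~ L.1, L.2).

Definition term_vars (t : term) : seq nat :=
  match t with inl _ => [::] | inr v => [:: v] end.
Definition term_consts (t : term) : seq nat :=
  match t with inl c => [:: c] | inr _ => [::] end.
Definition rule_lits (r : rule) : seq literal := rhead r ++ rbpos r ++ rbneg r.
Definition rule_vars (r : rule) : seq nat :=
  flatten [seq flatten (map term_vars l.2.2) | l <- rule_lits r].
Definition rule_consts (r : rule) : seq nat :=
  flatten [seq flatten (map term_consts l.2.2) | l <- rule_lits r].
Definition rule_preds (r : rule) : seq (nat * nat) :=
  [seq (l.2.1, size l.2.2) | l <- rule_lits r].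

Definition subst_term (th : nat -> nat) (t : term) : nat :=
  match t with inl c => c | inr v => th v end.
Definition subst_lit (th : nat -> nat) (l : literal) : glit :=
  (l.1, (l.2.1, map (subst_term th) l.2.2)).
Definition subst_rule (th : nat -> nat) (r : rule) : grule :=
  GRule (map (subst_lit th) (rhead r)) (map (subst_lit th) (rbpos r))
        (map (subst_lit th) (rbneg r)) (rstrict r).

Section Semantics.
(* A DLP^< program: a finite set O of object identifiers, strictly partially
   ordered by lt, each object o carrying its (finite) set of rules sigma o. *)
Variables (O : finType) (lt : rel O) (sigma : O -> seq rule).

Definition all_rules : seq rule := flatten [seq sigma o | o <- enum O].

Definition universe : seq nat := flatten (map rule_consts all_rules).
Definition preds : seq (nat * nat) := flatten (map rule_preds all_rules).

Definition in_base (L : glit) : Prop :=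
  (L.2.1, size L.2.2) \in preds /\ all (fun c => c \in universe) L.2.2.

(* ground instance gr of a rule of object o (obj_of gr = o); instances coming
   from different objects are distinct since they are tagged by o. *)
Definition ground_inst (o : O) (gr : grule) : Prop :=
  exists2 r, Stdlib.Lists.List.In r (sigma o) &
    exists th : nat -> nat,
      (forall v, v \in rule_vars r -> th v \in universe) /\ gr = subst_rule th r.

Definition gset := glit -> Prop.

Definition is_interp (I : gset) : Prop :=
  (forall L, I L -> in_base L) /\ (forall L, I L -> ~ I (gneg L)).

Definition head_true (I : gset) (r : grule) : Prop :=
  exists2 L, L \in ghead r & I L.
Definition body_true (I : gset) (r : grule) : Prop :=
  (forall L, L \in gbpos r -> I L) /\ (forall L, L \in gbneg r -> ~ I L).
Definition satisfied (I : gset) (r : grule) : Prop :=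
  head_true I r \/ ~ body_true I r.

Definition threatens (o1 : O) (r1 : grule) (o2 : O) (r2 : grule) (L : glit) : Prop :=
  gneg L \in ghead r1 /\ L \in ghead r2 /\ lt o1 o2 /\ gstrict r2 = false.

Definition overrides (I : gset) (o1 : O) (r1 : grule) (o2 : O) (r2 : grule)
    (L : glit) : Prop :=
  threatens o1 r1 o2 r2 L /\ I (gneg L) /\ body_true I r2.

Definition overridden (I : gset) (o : O) (r : grule) : Prop :=
  forall L, L \in ghead r ->
    exists o1 r1, ground_inst o1 r1 /\ overrides I o1 r1 o r L.

Definition is_model (I : gset) : Prop :=
  is_interp I /\
  forall o r, ground_inst o r -> satisfied I r \/ overridden I o r.

Definition proper_subset (J I : gset) : Prop :=
  (forall L, J L -> I L) /\ exists L, I L /\ ~ J L.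

Definition minimal_model (I : gset) : Prop :=
  is_model I /\ forall J, proper_subset J I -> ~ is_model J.

(* the reduction G_M(P): ground rules not overridden in M whose negative body
   is disjoint from M; the not-part and the marker are then ignored *)
Definition in_reduct (M : gset) (o : O) (r : grule) : Prop :=
  ground_inst o r /\ ~ overridden M o r /\ (forall L, L \in gbneg r -> ~ M L).

(* S is a model of the positive program pos(G_M(P)) (negative literals read
   as atoms of fresh predicates, i.e. glits are just atoms here) *)
Definition pos_reduct_model (M S : gset) : Prop :=
  forall o r, in_reduct M o r ->
    (forall L, L \in gbpos r -> S L) -> exists2 L, L \in ghead r & S L.

Definition answer_set (M : gset) : Prop :=
  is_model M /\ pos_reduct_model M M /\
  forall S, proper_subset S M -> ~ pos_reduct_model M S.

End Semantics.

From mathcomp Require Import all_boot.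

(* A model J of P strictly inside an answer set M would be a model of the
   reduct pos(G_M(P)): a reduct rule whose positive body holds in J has its
   whole body true in J and in M, and it cannot be overridden in J, since the
   overriding rules would also override it in M and the rule would not be in
   the reduct.  This contradicts the minimality of M for pos(G_M(P)). *)

Section ReductOfSubmodel.

Variables (O : finType) (lt : rel O) (sigma : O -> seq rule).
Variables (J M : gset).
Hypothesis subJM : forall L, J L -> M L.

Lemma overrides_subset o1 r1 o r L :
  body_true M r -> overrides lt J o1 r1 o r L -> overrides lt M o1 r1 o r L.
Proof. by move=> bodyM [threat [Jneg _]]; split; [|split; first exact: subJM]. Qed.

Lemma overridden_subset o r :
  body_true M r -> overridden lt sigma J o r -> overridden lt sigma M o r.
Proof.
move=> bodyM ovJ L headL; have [o1 [r1 [inst1 ovr]]] := ovJ L headL.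
by exists o1, r1; split; last exact: overrides_subset.
Qed.

Lemma model_pos_reduct_model :
  is_model lt sigma J -> pos_reduct_model lt sigma M J.
Proof.
move=> [_ modelJ] o r [inst [not_ovM negM]] posJ.
have bodyJ : body_true J r by split=> // L negL /subJM; exact: negM.
have bodyM : body_true M r by split=> [L /posJ /subJM|].
case: (modelJ o r inst) => [[headJ | /(_ bodyJ) []] | ovJ] //.
by case: not_ovM; exact: overridden_subset.
Qed.

End ReductOfSubmodel.

Theorem proposition3p1 (O : finType) (lt : rel O) (sigma : O -> seq rule)
  (lt_irr : irreflexive lt) (lt_trans : transitive lt) (M : gset) :
  answer_set lt sigma M -> minimal_model lt sigma M.
Proof.
move=> [modelM [_ minM]]; split=> // J subJM modelJ.
apply: (minM J subJM).
exact: model_pos_reduct_model subJM.1 modelJ.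
Qed.
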